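(* Let $(X,Y,G)$ be random with $X\in\mathcal{X}$, $Y\in\{0,1\}$, $G\in\{a,b\}$, $\Pr[G=g]>0$ and $0<p_g<1$ for $g\in\{a,b\}$, where $p_g:=\Pr[Y=1\mid G=g]$, and $\Delta p:=p_a-p_b\neq0$. Let $k$ be a measurable positive-definite kernel on $\mathcal{X}$ with RKHS $\mathcal{H}$, feature map $\phi$ and $\sup_x k(x,x)\le\kappa^2<\infty$. Let $P_g$ be the law of $X$ given $G=g$, $Q:=\tfrac12(P_a+P_b)$, $\mu:=\mathbb{E}_{X\sim Q}[\phi(X)]$, $\Sigma:=\mathbb{E}_{X\sim Q}[(\phi(X)-\mu)\otimes(\phi(X)-\mu)]=\sum_j\lambda_j e_j\otimes e_j$ with $\lambda_1\ge\lambda_2\ge\cdots\ge0$ and $\{e_j\}$ orthonormal, and assume there exist $\alpha>1$, $c_1,c_2>0$ with $c_1j^{-\alpha}\le\lambda_j\le c_2j^{-\alpha}$ for all $j$. Let $\mu_{y,g}:=\mathbb{E}[\phi(X)\mid Y=y,G=g]$, $\delta_y:=\mu_{y,a}-\mu_{y,b}$, and assume, for fixed $r>0$, $R>0$, that $\delta_y=\Sigma^r u_y$ with $\|u_y\|_{\mathcal{H}}\le R$ for $y\in\{0,1\}$. Let $S=\langle w,\phi(X)\rangle_{\mathcal{H}}\in[0,1]$ a.s. with $\|w\|_{\mathcal{H}}\le W$ and $\mathbb{E}[S\mid G=g]=p_g$ for $g\in\{a,b\}$. Let $V_m:=\operatorname{span}\{e_1,\dots,e_m\}$ and suppose $P_{V_m}\delta_y=0$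 for $y\in\{0,1\}$. Then, with $\rho_m:=\max_{h\in\{a,b\}}[p_h\|\delta_1\|_{\mathcal{H}}+(1-p_h)\|\delta_0\|_{\mathcal{H}}]$, \[\rho_m\le R\lambda_{m+1}^r=\Theta\big(R(m+1)^{-\alpha r}\big),\quad\text{hence}\quad \Pr[|S-Y|>t]\le\frac{W R\lambda_{m+1}^r}{|\Delta p|\,t}\ \text{ for all } t\in(0,1].\] Moreover, if these hypotheses (for the fixed distribution and fixed $S$) hold for a sequence of values $m\to\infty$, then $S=Y$ almost surely.
   Context: $P_{V_m}$ is the orthogonal projection onto $V_m$; $\Sigma^r$ is defined by functional calculus ($\Sigma^re_j=\lambda_j^re_j$). Implicit constants in $\Theta$ depend only on $c_1,c_2,r$. *)

From HB Require Import structures.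
From mathcomp Require Import all_boot all_order all_algebra.
From mathcomp Require Import all_classical all_reals all_analysis.
Set Implicit Arguments. Unset Strict Implicit. Unset Printing Implicit Defensive.
Import Order.TTheory GRing.Theory Num.Theory.
Import numFieldNormedType.Exports.
Local Open Scope classical_set_scope.
Local Open Scope ring_scope.

Section Hilbert.
Context {R : realType} {H : lmodType R}.

Definition hnorm (inner : H -> H -> R) (x : H) : R := Num.sqrt (inner x x).

Definition hlim (inner : H -> H -> R) (u : nat -> H) (l : H) : Prop :=
  forall eps : R, 0 < eps -> exists N : nat, forall n : nat,
    (N <= n)%N -> hnorm inner (u n - l) < eps.

Definition hcauchy (inner : H -> H -> R) (u : nat -> H) : Prop :=
  forall eps : R, 0 < eps -> exists N : nat, forall n p : nat,
    (N <= n)%N -> (N <= p)%N -> hnorm inner (u n - u p) < eps.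

Definition is_hilbert (inner : H -> H -> R) : Prop :=
  [/\ (forall x y, inner x y = inner y x),
      (forall a x y z, inner (a *: x + y) z = a * inner x z + inner y z),
      (forall x, 0 <= inner x x),
      (forall x, inner x x = 0 -> x = 0)
    & (forall u, hcauchy inner u -> exists l, hlim inner u l)].

Definition in_span (A : set H) (v : H) : Prop :=
  exists (n : nat) (c : nat -> R) (a : nat -> H),
    (forall i, (i < n)%N -> A (a i)) /\ v = \sum_(i < n) c i *: a i.

(* orthogonal projection onto V_m = span{e_1,...,e_m}, e orthonormal *)
Definition projV (inner : H -> H -> R) (e : nat -> H) (m : nat) (v : H) : H :=
  \sum_(1 <= j < m.+1) inner (e j) v *: e j.

End Hilbert.

Definition is_rkhs {R : realType} {Xs : Type} {H : lmodType R}
  (inner : H -> H -> R) (k : Xs -> Xs -> R) (phi : Xs -> H) : Prop :=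
  [/\ is_hilbert inner,
      (forall x y, inner (phi x) (phi y) = k x y)
    & (forall h (eps : R), 0 < eps ->
         exists v, in_span (range phi) v /\ hnorm inner (h - v) < eps)].

Definition pd_kernel {R : realType} {Xs : Type} (k : Xs -> Xs -> R) : Prop :=
  (forall x y, k x y = k y x) /\
  (forall (n : nat) (c : nat -> R) (x : nat -> Xs),
     0 <= \sum_(i < n) \sum_(j < n) c i * c j * k (x i) (x j)).

Section Prob.
Context {d : measure_display} {T : measurableType d} {R : realType}.
Variable P : probability T R.

Definition prob (A : set T) : R := fine (P A).

Definition cexp (A : set T) (f : T -> R) : R :=
  (\int[P]_(w in A) f w) / prob A.

End Prob.

(* If the first m eigen-coefficients of delta_y = Sigma^r u_y vanish, Bessel's
   inequality and the monotonicity of the eigenvalues give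
   ||delta_y|| <= lambda_{m+1}^r ||u_y||.
   Calibration E[S | G = g] = p_g means p_g FN_g = (1 - p_g) FP_g for the
   group-wise rates FN_g = 1 - E[S | Y = 1, G = g] and FP_g = E[S | Y = 0, G = g],
   whence (p_a - p_b) (FN_b + FP_b) = (1 - p_a) (FP_a - FP_b) - p_a (FN_a - FN_b).
   The differences FP_a - FP_b = <delta_0, w> and FN_b - FN_a = <delta_1, w> are
   at most W ||delta_y|| by Cauchy-Schwarz, so |Delta p| E|S - Y| <= W R lambda_{m+1}^r
   and Markov's inequality gives the tail bound. Along m -> oo the bound
   lambda_{m+1}^r <= c_2^r (m+1)^{-alpha r} vanishes, so P(|S - Y| > t) = 0. *)

From HB Require Import structures.
From mathcomp Require Import all_boot all_order all_algebra.
From mathcomp Require Import all_classical all_reals all_analysis.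
From mathcomp Require Import ring lra measurable_realfun.
Import Order.TTheory GRing.Theory Num.Theory.
Import numFieldNormedType.Exports.
Local Open Scope classical_set_scope.
Local Open Scope ring_scope.
Set Implicit Arguments. Unset Strict Implicit. Unset Printing Implicit Defensive.

Definition is_inner_product {R : realType} {H : lmodType R} (inner : H -> H -> R) :=
  [/\ (forall x y, inner x y = inner y x),
      (forall a x y z, inner (a *: x + y) z = a * inner x z + inner y z),
      (forall x, 0 <= inner x x)
    & (forall x, inner x x = 0 -> x = 0)].

Lemma hilbert_inner_product {R : realType} {H : lmodType R} (inner : H -> H -> R) :
  is_hilbert inner -> is_inner_product inner.
Proof. by case. Qed.

Section InnerProduct.
Context {R : realType} {H : lmodType R} (inner : H -> H -> R).
Hypothesis ip : is_inner_product inner.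

Lemma innerC x y : inner x y = inner y x.
Proof. by case: ip. Qed.

Lemma inner_ge0 x : 0 <= inner x x.
Proof. by case: ip. Qed.

Lemma inner_eq0 x : inner x x = 0 -> x = 0.
Proof. by case: ip => _ _ _; apply. Qed.

Lemma innerDl x y z : inner (x + y) z = inner x z + inner y z.
Proof. by case: ip => _ lin _ _; have := lin 1 x y z; rewrite scale1r mul1r. Qed.

Lemma inner0l z : inner 0 z = 0.
Proof. by have := innerDl 0 0 z; rewrite addr0 => h; lra. Qed.

Lemma innerZl a x z : inner (a *: x) z = a * inner x z.
Proof. by case: ip => _ lin _ _; have := lin a x 0 z; rewrite addr0 inner0l addr0. Qed.

Lemma innerNl x z : inner (- x) z = - inner x z.
Proof. by rewrite -scaleN1r innerZl mulN1r. Qed.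

Lemma innerBl x y z : inner (x - y) z = inner x z - inner y z.
Proof. by rewrite innerDl innerNl. Qed.

Lemma inner0r z : inner z 0 = 0.
Proof. by rewrite innerC inner0l. Qed.

Lemma innerDr x y z : inner z (x + y) = inner z x + inner z y.
Proof. by rewrite innerC innerDl !(innerC z). Qed.

Lemma innerZr a x z : inner z (a *: x) = a * inner z x.
Proof. by rewrite innerC innerZl innerC. Qed.

Lemma innerNr x z : inner z (- x) = - inner z x.
Proof. by rewrite innerC innerNl innerC. Qed.

Lemma innerBr x y z : inner z (x - y) = inner z x - inner z y.
Proof. by rewrite innerDr innerNr. Qed.

Lemma inner_suml I (s : seq I) (P : pred I) (F : I -> H) z :
  inner (\sum_(i <- s | P i) F i) z = \sum_(i <- s | P i) inner (F i) z.
Proof.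
elim/big_rec2: _ => [|i y1 y2 _ <-]; first exact: inner0l.
by rewrite innerDl.
Qed.

Lemma cauchy_schwarz x y : inner x y ^+ 2 <= inner x x * inner y y.
Proof.
set a := inner x y; set b := inner y y.
have [b0|bn0] := eqVneq b 0.
  by rewrite /a (inner_eq0 b0) inner0r expr0n /= b0 mulr0.
have b_gt0 : 0 < b by rewrite lt0r bn0 inner_ge0.
have := inner_ge0 (b *: x - a *: y).
rewrite !innerBl !innerBr !innerZl !innerZr -/a -/b (innerC y x) -/a => h.
have : 0 <= b * (b * inner x x - a ^+ 2) by nra.
by rewrite pmulr_rge0 // subr_ge0 => h2; nra.
Qed.

Lemma hnorm_ge0 x : 0 <= hnorm inner x.
Proof. exact: sqrtr_ge0. Qed.

Lemma sqr_hnorm x : hnorm inner x ^+ 2 = inner x x.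
Proof. by rewrite sqr_sqrtr // inner_ge0. Qed.

Lemma normr_inner_le x y : `|inner x y| <= hnorm inner x * hnorm inner y.
Proof.
rewrite -(ler_pXn2r (n:=2)) ?nnegrE ?mulr_ge0 ?hnorm_ge0 //.
by rewrite real_normK ?num_real // exprMn !sqr_hnorm cauchy_schwarz.
Qed.

Lemma ler_hnormD x y : hnorm inner (x + y) <= hnorm inner x + hnorm inner y.
Proof.
rewrite -(ler_pXn2r (n:=2)) ?nnegrE ?addr_ge0 ?hnorm_ge0 //.
rewrite sqr_hnorm innerDl !innerDr sqrrD !sqr_hnorm (innerC y x) mulr2n.
have := normr_inner_le x y; have := ler_norm (inner x y); lra.
Qed.

Lemma hnorm_distC x y : hnorm inner (x - y) = hnorm inner (y - x).
Proof. by rewrite /hnorm -opprB innerNl innerNr opprK. Qed.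

Lemma hlim_hnorm_le (u : nat -> H) l B : hlim inner u l ->
  (forall n, hnorm inner (u n) <= B) -> hnorm inner l <= B.
Proof.
move=> ul uB; rewrite leNgt; apply/negP; rewrite -subr_gt0 => Bl.
have [N /(_ N (leqnn N))] := ul _ Bl.
have := ler_hnormD (u N) (l - u N); rewrite addrC subrK hnorm_distC.
have := uB N; lra.
Qed.

Variable e : nat -> H.
Hypothesis e_orthonormal :
  forall i j, (0 < i)%N -> (0 < j)%N -> inner (e i) (e j) = (i == j)%:R.

Lemma hnorm_basis i : (0 < i)%N -> hnorm inner (e i) = 1.
Proof. by move=> i0; rewrite /hnorm e_orthonormal // eqxx sqrtr1. Qed.

Lemma inner_basis_sum (a : nat -> R) n i : (0 < i)%N ->
  inner (e i) (\sum_(1 <= j < n.+1) a j *: e j) = if (i <= n)%N then a i else 0.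
Proof.
move=> i0; elim: n => [|n IHn].
  by rewrite big_geq // inner0r; case: i i0.
rewrite big_nat_recr //= innerDr IHn innerZr e_orthonormal //.
case: (ltngtP i n.+1) => [lt_in|lt_ni|->]; rewrite ?mulr0 ?addr0.
- by rewrite -ltnS lt_in.
- by rewrite leqNgt ltnW.
- by rewrite ltnn mulr1 add0r.
Qed.

Lemma inner_basis_sum_self (a : nat -> R) n :
  inner (\sum_(1 <= j < n.+1) a j *: e j) (\sum_(1 <= j < n.+1) a j *: e j)
  = \sum_(1 <= j < n.+1) a j ^+ 2.
Proof.
rewrite inner_suml; apply: eq_big_nat => j /andP[j_gt0 j_le].
by rewrite innerZl inner_basis_sum // -ltnS j_le expr2.
Qed.

Lemma bessel_inequality u n : \sum_(1 <= j < n.+1) inner (e j) u ^+ 2 <= inner u u.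
Proof.
set s := \sum_(1 <= j < n.+1) inner (e j) u *: e j.
have su : inner s u = \sum_(1 <= j < n.+1) inner (e j) u ^+ 2.
  by rewrite inner_suml; apply: eq_big_nat => j _; rewrite innerZl expr2.
have := inner_ge0 (u - s).
by rewrite innerBl !innerBr inner_basis_sum_self (innerC u s) su; lra.
Qed.

Lemma inner_basis_hlim (v : nat -> H) l i b : (0 < i)%N -> hlim inner v l ->
  (forall n, (i <= n)%N -> inner (e i) (v n) = b) -> inner (e i) l = b.
Proof.
move=> i0 vl vb; apply/eqP; rewrite -subr_eq0 -normr_le0 leNgt; apply/negP => lb.
have [N /(_ (maxn N i) (leq_maxl _ _))] := vl _ lb.
rewrite -(vb (maxn N i) (leq_maxr _ _)) -innerBr hnorm_distC.
have := normr_inner_le (e i) (l - v (maxn N i)).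
rewrite hnorm_basis // mul1r => h1 h2.
by have := le_lt_trans h1 h2; rewrite ltxx.
Qed.

Lemma hnorm_multiplier_tail_le (b : nat -> R) u l m B : 0 <= B ->
  (forall j, (m < j)%N -> `|b j| <= B) ->
  hlim inner (fun n => \sum_(1 <= j < n.+1) (b j * inner (e j) u) *: e j) l ->
  projV inner e m l = 0 -> hnorm inner l <= B * hnorm inner u.
Proof.
move=> B0 bB ul Pl0.
have coef_l i : (0 < i)%N -> inner (e i) l = b i * inner (e i) u.
  by move=> i0; apply: (inner_basis_hlim i0 ul) => n i_le; rewrite inner_basis_sum // i_le.
have coef_head i : (0 < i)%N -> (i <= m)%N -> b i * inner (e i) u = 0.
  move=> i0 im; rewrite -coef_l //.
  have := inner_basis_sum (fun j => inner (e j) l) m i0.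
  by rewrite im -/(projV inner e m l) Pl0 inner0r.
apply: hlim_hnorm_le ul _ => n.
rewrite -(ler_pXn2r (n:=2)) ?nnegrE ?mulr_ge0 ?hnorm_ge0 //.
rewrite sqr_hnorm inner_basis_sum_self exprMn sqr_hnorm.
apply: le_trans (ler_wpM2l (sqr_ge0 B) (bessel_inequality u n)).
rewrite mulr_sumr big_nat_cond [leRHS]big_nat_cond.
apply: ler_sum => j /andP[/andP[j_gt0 _] _].
have [jm|mj] := leqP j m; first by rewrite coef_head // expr0n mulr_ge0 ?sqr_ge0.
rewrite exprMn ler_wpM2r ?sqr_ge0 //.
by move: (bB j mj); rewrite ler_norml => /andP[h1 h2]; nra.
Qed.

Lemma hnorm_source_tail_le (lambda : nat -> R) r u l m : 0 <= r ->
  (forall j, (0 < j)%N -> 0 <= lambda j) ->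
  (forall j, (0 < j)%N -> lambda j.+1 <= lambda j) ->
  hlim inner
    (fun n => \sum_(1 <= j < n.+1) (powR (lambda j) r * inner (e j) u) *: e j) l ->
  projV inner e m l = 0 -> hnorm inner l <= powR (lambda m.+1) r * hnorm inner u.
Proof.
move=> r0 lambda_ge0 lambda_step.
have lambda_anti i j : (i <= j)%N -> lambda j.+1 <= lambda i.+1.
  apply: (homo_leq (f := fun n => lambda n.+1) (r := fun x y => y <= x)) => //.
  - by move=> y x z xy yz; apply: le_trans yz xy.
  - by move=> n; apply: lambda_step.
apply: hnorm_multiplier_tail_le; first exact: powR_ge0.
case=> // j mj; rewrite ger0_norm ?powR_ge0 //.
by apply: ge0_ler_powR; rewrite ?nnegrE ?lambda_ge0 ?lambda_anti.
Qed.

End InnerProduct.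

Section PowerDecay.
Context {R : realType}.

Lemma powR_decay_bounds (c1 c2 alpha r n x : R) : 0 <= r -> 0 <= c1 -> 0 < n ->
  c1 * powR n (- alpha) <= x <= c2 * powR n (- alpha) ->
  c1 `^ r * powR n (- (alpha * r)) <= powR x r <= c2 `^ r * powR n (- (alpha * r)).
Proof.
move=> r0 c1_ge0 n_gt0 /andP[c1x xc2].
have c1n_ge0 : 0 <= c1 * powR n (- alpha) by rewrite mulr_ge0 ?powR_ge0.
have scale c : 0 <= c -> powR (c * powR n (- alpha)) r = c `^ r * powR n (- (alpha * r)).
  by move=> c0; rewrite powRM ?powR_ge0 // -powRrM mulNr.
have x_ge0 := le_trans c1n_ge0 c1x.
have c2_ge0 : 0 <= c2 by move: (le_trans x_ge0 xc2); rewrite pmulr_lge0 // powR_gt0.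
rewrite -scale // -scale //; apply/andP; split.
- by apply: ge0_ler_powR; rewrite ?nnegrE.
- by apply: ge0_ler_powR; rewrite ?nnegrE ?mulr_ge0 ?powR_ge0.
Qed.

Lemma powR_natN_small (s eps : R) : 0 < s -> 0 < eps ->
  exists N, forall m, (N <= m)%N -> powR m.+1%:R (- s) <= eps.
Proof.
move=> s_gt0 eps_gt0; set M := eps^-1 `^ s^-1.
have M_ge0 : 0 <= M by apply: powR_ge0.
exists (Num.bound M) => m Nm.
have Mm : M <= m.+1%:R.
  apply/ltW/(lt_le_trans (archi_boundP M_ge0)).
  by rewrite ler_nat (leq_trans Nm).
rewrite powRN -[leRHS]invrK lef_pV2 ?posrE ?invr_gt0 ?powR_gt0 ?ltr0Sn //.
have -> : eps^-1 = M `^ s by rewrite -powRrM mulVf ?gt_eqF // powRr1 // invr_ge0 ltW.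
by apply: ge0_ler_powR; rewrite ?nnegrE ?ler0n ?(ltW s_gt0).
Qed.

Lemma le0_of_frequently_le_powR (a K s : R) : 0 < s -> 0 <= K ->
  (forall N, exists m, (N <= m)%N /\ a <= K * powR m.+1%:R (- s)) -> a <= 0.
Proof.
move=> s_gt0 K_ge0 freq; rewrite leNgt; apply/negP => a_gt0.
have K1_gt0 : 0 < K + 1 := ltr_wpDl K_ge0 ltr01.
have [N small] := powR_natN_small s_gt0 (divr_gt0 a_gt0 K1_gt0).
have [m [Nm am]] := freq N.
have := le_trans am (ler_wpM2l K_ge0 (small m Nm)).
rewrite mulrA ler_pdivlMr //; nra.
Qed.

End PowerDecay.

Lemma measurable_inner_feature {R : realType} {d' : measure_display}
  {Xs : measurableType d'} {H : lmodType R}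
  (inner : H -> H -> R) (k : Xs -> Xs -> R) (phi : Xs -> H) :
  is_rkhs inner k phi -> measurable_fun setT (fun z : Xs * Xs => k z.1 z.2) ->
  forall h, measurable_fun setT (fun x => inner h (phi x)).
Proof.
case=> [/hilbert_inner_product ip kphi dense] mk h.
have span_meas v : in_span (range phi) v ->
    measurable_fun setT (fun x => inner v (phi x)).
  case=> n [c [a [a_phi ->]]].
  under eq_fun do rewrite (inner_suml ip).
  apply: measurable_sum => i; under eq_fun do rewrite (innerZl ip).
  have [x0 _ <-] := a_phi i (ltn_ord i).
  apply: measurable_funM => //; under eq_fun do rewrite kphi.
  exact: measurable_fun_pair2 x0 mk.
have approx n : exists v, in_span (range phi) v /\ hnorm inner (h - v) < n.+1%:R^-1.
  by apply: dense; rewrite invr_gt0.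
have [v vh] := choice approx.
apply: (measurable_fun_cvg (h := fun n x => inner (v n) (phi x))) => [n|x _].
  by apply: span_meas; case: (vh n).
apply/cvgrPdist_lt => eps eps_gt0; set K := hnorm inner (phi x).
have K_ge0 : 0 <= K by apply: hnorm_ge0.
exists (Num.bound (K / eps)) => // n /= Nn.
rewrite -(innerBl ip); apply: le_lt_trans (normr_inner_le ip _ _) _.
apply: (@le_lt_trans _ _ (n.+1%:R^-1 * K)).
  by apply: ler_wpM2r => //; apply/ltW; case: (vh n).
rewrite mulrC ltr_pdivrMr // mulrC -ltr_pdivrMr //.
apply: lt_le_trans (archi_boundP (divr_ge0 K_ge0 (ltW eps_gt0))) _.
by rewrite ler_nat; exact: leqW.
Qed.

Section Probability.
Context {d : measure_display} {T : measurableType d} {R : realType}.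
Variable P : probability T R.

Lemma prob_ge0 A : 0 <= prob P A.
Proof. by rewrite /prob fine_ge0 // measure_ge0. Qed.

Lemma measurable_level (f : T -> bool) b :
  measurable (f @^-1` [set true]) -> measurable [set x | f x = b].
Proof.
case: b => // mf; rewrite [X in measurable X](_ : _ = ~` (f @^-1` [set true])).
  exact: measurableC.
by apply/seteqP; split => x /=; case: (f x).
Qed.

Lemma measurable_natr_bool (f : T -> bool) :
  measurable (f @^-1` [set true]) -> measurable_fun setT (fun x => (f x)%:R : R).
Proof.
move=> mf; rewrite (_ : (fun x => _) = \1_(f @^-1` [set true])).
  exact: measurable_indic.
apply/funext => x; rewrite indicE.
by case fx: (f x); [rewrite mem_set | rewrite memNset //= fx].
Qed.

Lemma prob_split_level A (f : T -> bool) : measurable A ->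
  measurable (f @^-1` [set true]) ->
  prob P A = prob P (A `&` [set x | f x = true]) + prob P (A `&` [set x | f x = false]).
Proof.
move=> mA mf; have mI b := measurableI _ _ mA (measurable_level b mf).
rewrite /prob -fineD ?fin_num_measure // -measureU //.
  congr (fine (P _)); apply/seteqP; split => x /=; last by case=> -[].
  by move=> Ax; case: (f x); [left | right].
by apply/seteqP; split => x //= [[_ ->] [_]].
Qed.

Lemma Rintegral_split_level A (f : T -> bool) (h : T -> R) : measurable A ->
  measurable (f @^-1` [set true]) -> P.-integrable A (EFin \o h) ->
  \int[P]_(x in A) h x = \int[P]_(x in A `&` [set x | f x = true]) h x
                         + \int[P]_(x in A `&` [set x | f x = false]) h x.
Proof.
move=> mA mf hA; have mI b := measurableI _ _ mA (measurable_level b mf).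
have AU : A = (A `&` [set x | f x = true]) `|` (A `&` [set x | f x = false]).
  apply/seteqP; split => x /=; last by case=> -[].
  by move=> Ax; case: (f x); [left | right].
rewrite {1}AU Rintegral_setU -?AU //.
by apply/disj_setPS => x /= [[_ ->] [_]].
Qed.

Lemma integrable_ae_bounded (h : T -> R) M D : measurable D -> measurable_fun setT h ->
  {ae P, forall x, `|h x| <= M} -> P.-integrable D (EFin \o h).
Proof.
move=> mD mh hM; have M_ge0 : 0 <= `|M| := normr_ge0 M.
apply/integrableP; split; first by apply/measurable_EFinP; exact: measurable_funS mh.
apply: (@le_lt_trans _ _ (\int[P]_(x in D) (cst `|M|%:E) x)%E).
  apply: ae_ge0_le_integral => //.
  - apply: measurableT_comp => //; apply/measurable_EFinP.
    exact: measurable_funS mh.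
  - by apply: filterS hM => x hx _; rewrite lee_fin (le_trans hx) ?ler_norm.
rewrite integral_cst //; apply: lte_mul_pinfty => //.
exact: le_lt_trans (probability_le1 P mD) (ltry 1).
Qed.

Lemma ae_eq_Rintegral D (f g : T -> R) : measurable D -> measurable_fun D f ->
  measurable_fun D g -> ae_eq P D f g ->
  \int[P]_(x in D) f x = \int[P]_(x in D) g x.
Proof.
move=> mD mf mg fg; congr fine.
by apply: ae_eq_integral => //; [exact/measurable_EFinP|exact/measurable_EFinP|
  exact: ae_eq_comp].
Qed.

Lemma measurable_gt (h : T -> R) t : measurable_fun setT h ->
  measurable [set x | t < h x].
Proof.
move=> mh; rewrite (_ : [set x | _] = setT `&` h @^-1` `]t, +oo[); first exact: mh.
by apply/seteqP; split => x /=; rewrite in_itv /= andbT //; case.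
Qed.

Lemma markov_Rintegral (h : T -> R) t : measurable_fun setT h ->
  (forall x, 0 <= h x) -> P.-integrable setT (EFin \o h) -> 0 < t ->
  t * prob P [set x | t < h x] <= \int[P]_x h x.
Proof.
move=> mh h_ge0 hint t_gt0; set B := [set x | t < h x].
have mB : measurable B := measurable_gt t mh.
have hB : P.-integrable B (EFin \o h) by apply: integrableS hint.
rewrite /prob -Rintegral_cst //.
apply: (@le_trans _ _ (\int[P]_(x in B) h x)).
  apply: le_Rintegral => //; first exact: finite_measure_integrable_cst.
  by move=> x /ltW.
apply: fine_le; rewrite ?inE; try exact: integrable_fin_num.
apply: ge0_subset_integral => //; first exact/measurable_EFinP.
by move=> x _; rewrite lee_fin.
Qed.

Lemma ae_eq_of_prob_dist_eq0 (f g : T -> R) :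
  measurable_fun setT f -> measurable_fun setT g ->
  (forall t, 0 < t <= 1 -> prob P [set x | t < `|f x - g x|] = 0) ->
  {ae P, forall x, f x = g x}.
Proof.
move=> mf mg null; pose B t := [set x | t < `|f x - g x|].
have mB t : measurable (B t).
  by apply: measurable_gt; apply: measurableT_comp => //; exact: measurable_funB.
have B_null n : {ae P, forall x, ~ B n.+1%:R^-1 x}.
  exists (B n.+1%:R^-1); split => //; last by move=> x /contrapT.
  rewrite -(fineK (fin_num_measure P _ (mB _))) [fine _]null //.
  by rewrite invr_gt0 ltr0Sn invf_le1 ?ler1n.
apply: filterS (ae_foralln B_null) => x notB.
apply/eqP; rewrite -subr_eq0 -normr_le0 leNgt; apply/negP => fg_gt0.
apply: (notB (Num.bound `|f x - g x|^-1)).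
rewrite /B /= -[ltRHS]invrK ltf_pV2 ?posrE ?invr_gt0 ?ltr0Sn //.
apply: lt_le_trans (archi_boundP _) _; first by rewrite invr_ge0 ltW.
by rewrite ler_nat.
Qed.

End Probability.

Section GroupRates.
Context {R : realFieldType}.

Lemma convex_comb_le (p a b B : R) : 0 <= p <= 1 -> a <= B -> b <= B ->
  p * a + (1 - p) * b <= B.
Proof. by move=> /andP[p0 p1] aB bB; nra. Qed.

Lemma balanced_gap_le (pa pb FNa FNb FPa FPb eps : R) :
  0 <= pa <= 1 -> 0 <= FNb -> 0 <= FPb ->
  pa * FNa = (1 - pa) * FPa -> pb * FNb = (1 - pb) * FPb ->
  `|FNa - FNb| <= eps -> `|FPa - FPb| <= eps ->
  `|pa - pb| * (FNb + FPb) <= eps.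
Proof.
move=> pa01 FNb0 FPb0 bal_a bal_b FN_eps FP_eps.
have gap_eq : (pa - pb) * (FNb + FPb) = (1 - pa) * (FPa - FPb) - pa * (FNa - FNb).
  by lra.
rewrite -(ger0_norm (addr_ge0 FNb0 FPb0)) -normrM gap_eq.
apply: le_trans (ler_normB _ _) _; rewrite !normrM.
case/andP: pa01 => pa0 pa1; have qa0 : 0 <= 1 - pa by rewrite subr_ge0.
rewrite (ger0_norm pa0) (ger0_norm qa0).
by have := ler_wpM2l pa0 FN_eps; have := ler_wpM2l qa0 FP_eps; lra.
Qed.

Lemma mixture_error_le (w p FN FP : bool -> R) eps :
  (forall g, 0 <= w g) -> w true + w false = 1 ->
  (forall g, 0 <= p g <= 1) -> (forall g, 0 <= FN g) -> (forall g, 0 <= FP g) ->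
  (forall g, p g * FN g = (1 - p g) * FP g) ->
  `|FN true - FN false| <= eps -> `|FP true - FP false| <= eps ->
  `|p true - p false| * (w true * (p true * FN true + (1 - p true) * FP true)
                        + w false * (p false * FN false + (1 - p false) * FP false))
    <= eps.
Proof.
move=> w0 w1 p01 FN0 FP0 bal FN_eps FP_eps.
have gap g : `|p true - p false| * (FN g + FP g) <= eps.
  case: g; last exact: balanced_gap_le.
  by rewrite distrC; apply: balanced_gap_le; rewrite // distrC.
have mix g : p g * FN g + (1 - p g) * FP g <= FN g + FP g.
  by case/andP: (p01 g) (FN0 g) (FP0 g) => ? ? ? ?; nra.
have := ler_wpM2l (w0 true) (le_trans (ler_wpM2l (normr_ge0 _) (mix true)) (gap true)).
have := ler_wpM2l (w0 false) (le_trans (ler_wpM2l (normr_ge0 _) (mix false)) (gap false)).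
have : w true * eps + w false * eps = eps by rewrite -mulrDl w1 mul1r.
by lra.
Qed.

End GroupRates.

Definition group_event {T : Type} (G : T -> bool) g := [set x | G x = g].

Definition cell_event {T : Type} (Y G : T -> bool) y g :=
  [set x | Y x = y] `&` group_event G g.

Definition base_rate {d : measure_display} {T : measurableType d} {R : realType}
  (P : probability T R) (Y G : T -> bool) g :=
  prob P (cell_event Y G true g) / prob P (group_event G g).

Section CalibratedScore.
Context {d : measure_display} {T : measurableType d} {R : realType}.
Variables (P : probability T R) (Y G : T -> bool) (S : T -> R).
Hypothesis mY : measurable (Y @^-1` [set true]).
Hypothesis mG : measurable (G @^-1` [set true]).
Hypothesis mS : measurable_fun setT S.
Hypothesis S01 : {ae P, forall x, 0 <= S x <= 1}.
Hypothesis rate01 : forall g, 0 < base_rate P Y G g < 1.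
Hypothesis calibrated : forall g, cexp P (group_event G g) S = base_rate P Y G g.

Local Notation rate := (base_rate P Y G).
Local Notation pgroup g := (prob P (group_event G g)).
Local Notation pcell y g := (prob P (cell_event Y G y g)).
Local Notation cmean y g := (cexp P (cell_event Y G y g) S).

Let mgroup g : measurable (group_event G g) := measurable_level g mG.

Let mcell y g : measurable (cell_event Y G y g) :=
  measurableI _ _ (measurable_level y mY) (mgroup g).

Let merr : measurable_fun setT (fun x => `|S x - (Y x)%:R|).
Proof.
apply: measurableT_comp => //; apply: measurable_funB => //.
exact: measurable_natr_bool.
Qed.

Let S_int D : measurable D -> P.-integrable D (EFin \o S).
Proof.
move=> mD; apply: (integrable_ae_bounded (M := 1) mD mS).
by apply: filterS S01 => x /andP[S0 S1]; rewrite ger0_norm.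
Qed.

Let err_int D : measurable D -> P.-integrable D (EFin \o (fun x => `|S x - (Y x)%:R|)).
Proof.
move=> mD; apply: (integrable_ae_bounded (M := 1) mD merr).
apply: filterS S01 => x /andP[S0 S1]; rewrite normr_id.
case: (Y x) => /=; rewrite ?mulr1n ?mulr0n.
- by rewrite ler0_norm ?subr_le0 // opprB lerBlDr lerDl.
- by rewrite subr0 ger0_norm.
Qed.

Lemma prob_group_cells g : pgroup g = pcell true g + pcell false g.
Proof. by rewrite (prob_split_level _ (mgroup g) mY) /cell_event !(setIC _ (group_event G g)). Qed.

Lemma prob_groups_sum : pgroup true + pgroup false = 1.
Proof.
have := prob_split_level P measurableT mG; rewrite !setTI /prob probability_setT.
by move=> <-.
Qed.

Lemma prob_cell_gt0 y g : 0 < pcell y g.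
Proof.
have := rate01 g; rewrite /base_rate prob_group_cells => /andP[q0 q1].
(* [0 < rate g] excludes the junk value [x / 0 = 0] of an empty group. *)
have p1_gt0 : 0 < pcell true g.
  by rewrite lt_def prob_ge0 andbT; apply: contraTneq q0 => ->; rewrite mul0r ltxx.
have := prob_ge0 P (cell_event Y G false g) => p0_ge0.
case: y => //; move: q1; rewrite ltr_pdivrMr ?mul1r; lra.
Qed.

Lemma Rintegral_score_ge0 D : measurable D -> 0 <= \int[P]_(x in D) S x.
Proof.
move=> mD; rewrite (ae_eq_Rintegral (g := fun x => `|S x|)) //.
- exact: Rintegral_ge0.
- exact: measurable_funS mS.
- by apply: measurable_funS (measurableT_comp _ mS).
- by apply: filterS S01 => x /andP[S0 _] _; rewrite ger0_norm.
Qed.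

Lemma calibrated_cells g :
  \int[P]_(x in cell_event Y G true g) S x + \int[P]_(x in cell_event Y G false g) S x
  = pcell true g.
Proof.
have := calibrated g; rewrite /cexp /base_rate.
rewrite (Rintegral_split_level (mgroup g) mY (S_int (mgroup g))).
rewrite /cell_event !(setIC _ (group_event G g)) => /(congr1 (fun z => z * pgroup g)).
by rewrite !divfK // gt_eqF // prob_group_cells addr_gt0 ?prob_cell_gt0.
Qed.

Lemma calibration_balance g : rate g * (1 - cmean true g) = (1 - rate g) * cmean false g.
Proof.
have := calibrated_cells g; rewrite /base_rate /cexp prob_group_cells.
have := prob_cell_gt0 true g; have := prob_cell_gt0 false g.
set I1 := \int[P]_(x in _) _; set I0 := \int[P]_(x in _) _.
move=> p0_gt0 p1_gt0 cells.
have -> : I1 = pcell true g - I0 by rewrite -cells addrK.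
by field; rewrite !gt_eqF ?addr_gt0.
Qed.

Lemma cmean_false_ge0 g : 0 <= cmean false g.
Proof. by rewrite divr_ge0 ?prob_ge0 ?Rintegral_score_ge0. Qed.

Lemma cmean_true_le1 g : cmean true g <= 1.
Proof.
rewrite ler_pdivrMr ?prob_cell_gt0 // mul1r -(calibrated_cells g) lerDl.
exact: Rintegral_score_ge0.
Qed.

Lemma Rintegral_error_cell_true g :
  \int[P]_(x in cell_event Y G true g) `|S x - (Y x)%:R| = pcell true g * (1 - cmean true g).
Proof.
rewrite (ae_eq_Rintegral (g := fun x => 1 - S x)) //.
- rewrite RintegralB ?Rintegral_cst ?mul1r ?S_int //; last exact: finite_measure_integrable_cst.
  by rewrite /cexp mulrBr mulr1 mulrCA divff ?mulr1 // gt_eqF ?prob_cell_gt0.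
- exact: measurable_funS merr.
- by apply: measurable_funS (measurable_funB _ mS).
- apply: filterS S01 => x /andP[_ S1] [/= -> _].
  by rewrite ler0_norm ?opprB // subr_le0.
Qed.

Lemma Rintegral_error_cell_false g :
  \int[P]_(x in cell_event Y G false g) `|S x - (Y x)%:R| = pcell false g * cmean false g.
Proof.
rewrite (ae_eq_Rintegral (g := S)) //.
- by rewrite /cexp mulrCA divff ?mulr1 // gt_eqF ?prob_cell_gt0.
- exact: measurable_funS merr.
- exact: measurable_funS mS.
- by apply: filterS S01 => x /andP[S0 _] [/= -> _]; rewrite subr0 ger0_norm.
Qed.

Lemma Rintegral_error :
  \int[P]_x `|S x - (Y x)%:R|
  = pgroup true * (rate true * (1 - cmean true true) + (1 - rate true) * cmean false true)
  + pgroup false * (rate false * (1 - cmean true false) + (1 - rate false) * cmean false false).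
Proof.
have groups := Rintegral_split_level measurableT mG (err_int measurableT).
have cells g : \int[P]_(x in group_event G g) `|S x - (Y x)%:R|
    = \int[P]_(x in cell_event Y G true g) `|S x - (Y x)%:R|
    + \int[P]_(x in cell_event Y G false g) `|S x - (Y x)%:R|.
  rewrite (Rintegral_split_level (mgroup g) mY (err_int (mgroup g))).
  by rewrite /cell_event !(setIC _ (group_event G g)).
rewrite groups !setTI !cells !Rintegral_error_cell_true !Rintegral_error_cell_false.
rewrite /base_rate !prob_group_cells.
by field; rewrite !gt_eqF ?addr_gt0 ?prob_cell_gt0.
Qed.

Lemma calibrated_error_prob_le eps t : rate true != rate false -> 0 < t ->
  (forall y, `|cmean y true - cmean y false| <= eps) ->
  prob P [set x | t < `|S x - (Y x)%:R|] <= eps / (`|rate true - rate false| * t).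
Proof.
move=> rate_neq t_gt0 gap_eps.
have markov := markov_Rintegral merr (fun x => normr_ge0 _) (err_int measurableT) t_gt0.
rewrite Rintegral_error in markov.
rewrite ler_pdivlMr ?mulr_gt0 ?normr_gt0 ?subr_eq0 //.
apply: le_trans _ (mixture_error_le (w := fun g => pgroup g) (FN := fun g => 1 - cmean true g) _ prob_groups_sum
  _ _ cmean_false_ge0 calibration_balance _ (gap_eps false)).
- by rewrite mulrC -mulrA ler_wpM2l.
- by move=> g; exact: prob_ge0.
- by move=> g; case/andP: (rate01 g) => /ltW -> /ltW ->.
- by move=> g; rewrite subr_ge0 cmean_true_le1.
- by rewrite opprB addrC addrA subrK distrC; exact: gap_eps true.
Qed.

End CalibratedScore.

Section FairnessBound.
Context {R : realType} {d d' : measure_display} {Omega : measurableType d}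
  {Xs : measurableType d'} {H : lmodType R}.
Variables (P : probability Omega R) (X : Omega -> Xs) (Y G : Omega -> bool).
Variables (inner : H -> H -> R) (phi : Xs -> H) (lambda : nat -> R) (e : nat -> H).
Variables (muYG : bool -> bool -> H) (u : bool -> H) (w : H).
Variables (alpha c1 c2 r Rb W : R).

Local Notation p := (base_rate P Y G).
Local Notation S := (fun om => inner w (phi (X om))).
Local Notation delta y := (muYG y true - muYG y false).

Hypothesis ip : is_inner_product inner.
Hypothesis e_orthonormal :
  forall i j, (0 < i)%N -> (0 < j)%N -> inner (e i) (e j) = (i == j)%:R.
Hypothesis lambda_step : forall j, (0 < j)%N -> lambda j.+1 <= lambda j.
Hypothesis lambda_ge0 : forall j, (0 < j)%N -> 0 <= lambda j.
Hypothesis r_gt0 : 0 < r.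
Hypothesis u_le : forall y, hnorm inner (u y) <= Rb.
Hypothesis source : forall y, hlim inner
  (fun n => \sum_(1 <= j < n.+1) (powR (lambda j) r * inner (e j) (u y)) *: e j)
  (delta y).
Hypothesis alpha_gt0 : 0 < alpha.
Hypothesis c1_ge0 : 0 <= c1.
Hypothesis lambda_decay : forall j, (0 < j)%N ->
  c1 * powR j%:R (- alpha) <= lambda j <= c2 * powR j%:R (- alpha).
Hypothesis Rb_ge0 : 0 <= Rb.
Hypothesis muYG_def : forall y g h,
  inner (muYG y g) h = cexp P (cell_event Y G y g) (fun om => inner (phi (X om)) h).
Hypothesis w_le : hnorm inner w <= W.
Hypothesis mY : measurable (Y @^-1` [set true]).
Hypothesis mG : measurable (G @^-1` [set true]).
Hypothesis mS : measurable_fun setT S.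
Hypothesis S01 : {ae P, forall om, 0 <= S om <= 1}.
Hypothesis p01 : forall g, 0 < p g < 1.
Hypothesis p_neq : p true - p false != 0.
Hypothesis calibrated : forall g, cexp P (group_event G g) S = p g.

Lemma lambda_pow_bounds m :
  c1 `^ r * powR (m.+1%:R) (- (alpha * r)) <= powR (lambda m.+1) r
    <= c2 `^ r * powR (m.+1%:R) (- (alpha * r)).
Proof. exact: powR_decay_bounds (ltW r_gt0) c1_ge0 (ltr0Sn _ m) (lambda_decay (ltn0Sn m)). Qed.

Section Truncation.
Variable m : nat.
Hypothesis delta0_proj : projV inner e m (delta false) = 0.
Hypothesis delta1_proj : projV inner e m (delta true) = 0.

Lemma hnorm_delta_le y : hnorm inner (delta y) <= Rb * powR (lambda m.+1) r.
Proof.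
rewrite mulrC; apply: le_trans (ler_wpM2l (powR_ge0 _ _) (u_le y)).
apply: (hnorm_source_tail_le ip e_orthonormal (ltW r_gt0) lambda_ge0 lambda_step (source y)).
by case: y.
Qed.

Lemma rho_le : Num.max
    (p true * hnorm inner (delta true) + (1 - p true) * hnorm inner (delta false))
    (p false * hnorm inner (delta true) + (1 - p false) * hnorm inner (delta false))
  <= Rb * powR (lambda m.+1) r.
Proof.
have p01' g : 0 <= p g <= 1 by case/andP: (p01 g) => /ltW -> /ltW ->.
by rewrite ge_max !convex_comb_le ?hnorm_delta_le.
Qed.

Lemma cmean_gap_le y :
  `|cexp P (cell_event Y G y true) S - cexp P (cell_event Y G y false) S|
    <= W * (Rb * powR (lambda m.+1) r).
Proof.
have cexp_S g : cexp P (cell_event Y G y g) S = inner (muYG y g) w.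
  by rewrite muYG_def /cexp; congr (_ / _); apply: eq_Rintegral => x _; exact: innerC.
rewrite !cexp_S -(innerBl ip); apply: le_trans (normr_inner_le ip _ _) _.
by rewrite mulrC ler_pM ?hnorm_ge0 ?hnorm_delta_le.
Qed.

Lemma error_prob_le t : 0 < t ->
  prob P [set om | t < `|S om - (Y om)%:R|]
    <= W * Rb * powR (lambda m.+1) r / (`|p true - p false| * t).
Proof.
move=> t_gt0; rewrite -(mulrA W).
apply: (calibrated_error_prob_le mY mG mS S01 p01 calibrated) => //.
  by rewrite -subr_eq0.
exact: cmean_gap_le.
Qed.

End Truncation.

Lemma score_ae_eq_label :
  (forall N, exists m, (N <= m)%N /\
     projV inner e m (delta false) = 0 /\ projV inner e m (delta true) = 0) ->
  {ae P, forall om, S om = (Y om)%:R}.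
Proof.
move=> freq; apply: ae_eq_of_prob_dist_eq0 => // [|t /andP[t_gt0 _]].
  exact: measurable_natr_bool.
apply/le_anti; rewrite prob_ge0 andbT.
have W_ge0 : 0 <= W := le_trans (hnorm_ge0 inner w) w_le.
apply: (le0_of_frequently_le_powR (s := alpha * r)
  (K := W * Rb / (`|p true - p false| * t) * c2 `^ r)).
- exact: mulr_gt0.
- by rewrite mulr_ge0 ?divr_ge0 ?mulr_ge0 ?powR_ge0 ?(ltW t_gt0).
move=> N; have [m [Nm [P0 P1]]] := freq N; exists m; split => //.
apply: le_trans (error_prob_le P0 P1 t_gt0) _.
rewrite mulrAC -[leRHS]mulrA ler_wpM2l ?divr_ge0 ?mulr_ge0 ?(ltW t_gt0) //.
by case/andP: (lambda_pow_bounds m).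
Qed.

End FairnessBound.

(* Group a is encoded by G = true, group b by G = false; Y = 1 is Y = true. *)
Theorem theorem8
  (R : realType) (d d' : measure_display)
  (Omega : measurableType d) (P : probability Omega R)
  (Xs : measurableType d') (X : Omega -> Xs) (Y G : Omega -> bool)
  (H : lmodType R) (inner : H -> H -> R)
  (k : Xs -> Xs -> R) (phi : Xs -> H) (kappa : R)
  (mu : H) (Sigma : H -> H) (lambda : nat -> R) (e : nat -> H)
  (alpha c1 c2 : R)
  (muYG : bool -> bool -> H)
  (r Rb : R) (u : bool -> H)
  (w : H) (W : R) :
  let Gev g := [set om | G om = g] in
  let YGev y g := [set om | Y om = y /\ G om = g] in
  let p g := prob P (YGev true g) / prob P (Gev g) in
  let EQ (f : Xs -> R) :=
    (cexp P (Gev true) (f \o X) + cexp P (Gev false) (f \o X)) / 2 in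
  let delta y := muYG y true - muYG y false in
  let S om := inner w (phi (X om)) in
  (* the random variables *)
  measurable_fun setT X ->
  measurable (Y @^-1` [set true]) ->
  measurable (G @^-1` [set true]) ->
  (forall g, 0 < prob P (Gev g)) ->
  (forall g, 0 < p g < 1) ->
  p true - p false != 0 ->
  (* kernel, RKHS, feature map, boundedness *)
  measurable_fun setT (fun z : Xs * Xs => k z.1 z.2) ->
  pd_kernel k ->
  is_rkhs inner k phi ->
  (forall x, k x x <= kappa ^+ 2) ->
  (* mean and covariance of phi(X) under Q = (P_a + P_b)/2 *)
  (forall h, inner mu h = EQ (fun x => inner (phi x) h)) ->
  (forall h h', inner (Sigma h) h' =
     EQ (fun x => inner (phi x - mu) h * inner (phi x - mu) h')) ->
  (* spectral decomposition Sigma = sum_j lambda_j e_j (x) e_j *)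
  (forall i j, (0 < i)%N -> (0 < j)%N -> inner (e i) (e j) = (i == j)%:R) ->
  (forall h, hlim inner
     (fun n => \sum_(1 <= j < n.+1) (lambda j * inner (e j) h) *: e j)
     (Sigma h)) ->
  (forall j, (0 < j)%N -> lambda j.+1 <= lambda j) ->
  (forall j, (0 < j)%N -> 0 <= lambda j) ->
  (* polynomial eigenvalue decay *)
  1 < alpha -> 0 < c1 -> 0 < c2 ->
  (forall j, (0 < j)%N ->
     c1 * powR (j%:R) (- alpha) <= lambda j <= c2 * powR (j%:R) (- alpha)) ->
  (* conditional mean embeddings *)
  (forall y g h, inner (muYG y g) h =
     cexp P (YGev y g) (fun om => inner (phi (X om)) h)) ->
  (* source condition delta_y = Sigma^r u_y, ||u_y|| <= Rb *)
  0 < r -> 0 < Rb ->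
  (forall y, hnorm inner (u y) <= Rb) ->
  (forall y, hlim inner
     (fun n => \sum_(1 <= j < n.+1) (powR (lambda j) r * inner (e j) (u y)) *: e j)
     (delta y)) ->
  (* the score S = <w, phi(X)> *)
  hnorm inner w <= W ->
  {ae P, forall om, 0 <= S om <= 1} ->
  (forall g, cexp P (Gev g) S = p g) ->
  (forall m : nat,
     projV inner e m (delta false) = 0 ->
     projV inner e m (delta true) = 0 ->
     let rho := Num.max
        (p true * hnorm inner (delta true) + (1 - p true) * hnorm inner (delta false))
        (p false * hnorm inner (delta true) + (1 - p false) * hnorm inner (delta false)) in
     [/\ rho <= Rb * powR (lambda m.+1) r,
         c1 `^ r * powR (m.+1%:R) (- (alpha * r)) <= powR (lambda m.+1) r
           <= c2 `^ r * powR (m.+1%:R) (- (alpha * r))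
       & forall t : R, 0 < t <= 1 ->
           prob P [set om | t < `|S om - (Y om)%:R|]
             <= W * Rb * powR (lambda m.+1) r / (`|p true - p false| * t)])
  /\
  ((forall N : nat, exists m : nat, (N <= m)%N /\
      projV inner e m (delta false) = 0 /\ projV inner e m (delta true) = 0) ->
   {ae P, forall om, S om = (Y om)%:R}).
Proof.
move=> Gev YGev p EQ delta S mX mY mG _ p01 p_neq mk _ rkhs _ _ _ e_on _
  lambda_step lambda_ge0 alpha_gt1 c1_gt0 _ decay muYG_def r_gt0 Rb_gt0 u_le source
  w_le S01 calibrated.
have ip : is_inner_product inner by case: rkhs => /hilbert_inner_product.
have mS : measurable_fun setT S := measurableT_comp (measurable_inner_feature rkhs mk w) mX.
have c1_ge0 := ltW c1_gt0; have Rb_ge0 := ltW Rb_gt0.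
have alpha_gt0 := lt_trans ltr01 alpha_gt1.
split=> [m P0 P1 rho|]; first split.
- by apply: (rho_le ip e_on lambda_step lambda_ge0 r_gt0 u_le source).
- exact: lambda_pow_bounds.
- by move=> t /andP[t_gt0 _]; apply: (error_prob_le ip e_on lambda_step lambda_ge0 r_gt0 u_le source).
- by apply: (score_ae_eq_label (G := G) ip e_on lambda_step lambda_ge0 r_gt0 u_le
    source alpha_gt0 c1_ge0 decay).
Qed.
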